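(* Let $\mathcal{H}=\mathbb{C}^2$ and consider on $\mathcal{H}^{\otimes3}$ (factors $A,B,C$) the Hermitian operator $$w=a\mathbb{I}+bV_{(AB)}+cV_{(AC)}+dV_{(BC)}+\frac{if}{2}\big(V_{(ABC)}-V_{(CBA)}\big),\qquad a,b,c,d,f\in\mathbb{R}.$$ If $w$ is local-positive, then $w'=a\mathbb{I}+bV_{(AB)}+cV_{(AC)}+dV_{(BC)}$ is local-positive, and $w$ and $w'$ have the same bipartite reductions $\operatorname{Tr}_A$, $\operatorname{Tr}_B$, $\operatorname{Tr}_C$.
   Context: $V_{(XY)}$ denotes the operator swapping tensor factors $X$ and $Y$; $V_{(ABC)}$ denotes the operator permuting the three factors cyclically and $V_{(CBA)}=V_{(ABC)}^{\dagger}$ the inverse cyclic permutation. An operator $M$ on $\mathcal{H}^{\otimes3}$ is local-positive (with respect to the three factors) if $\langle\psi_1\psi_2\psi_3|M|\psi_1\psi_2\psi_3\rangle\ge0$ for all unit vectors $\psi_1,\psi_2,\psi_3\in\mathcal{H}$. *)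

(* Complex scalars: an arbitrary numClosedFieldType C
   (the complex numbers are the intended instance). *)
From HB Require Import structures.
From mathcomp Require Import all_boot all_order all_algebra.
Set Implicit Arguments. Unset Strict Implicit. Unset Printing Implicit Defensive.
Import Order.TTheory GRing.Theory Num.Theory Num.Def.
Local Open Scope ring_scope.

(* Computational basis of H^{(x)3}, H = C^2, factors ordered (A, B, C). *)
Definition idx3 := ('I_2 * 'I_2 * 'I_2)%type.
Definition idx2 := ('I_2 * 'I_2)%type.

(* An operator on H^{(x)3} given by its matrix entries M i j = <i|M|j>. *)
Definition op3 (C : Type) := idx3 -> idx3 -> C.
Definition op2 (C : Type) := idx2 -> idx2 -> C.

Section Ops.
Variable C : numClosedFieldType.

(* operator induced by a map on basis vectors: P |j> = |s j> *)
Definition permop (s : idx3 -> idx3) : op3 C := fun i j => (i == s j)%:R.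

Definition Id3 : op3 C := permop id.
Definition V_AB : op3 C := permop (fun j => (j.1.2, j.1.1, j.2)).
Definition V_AC : op3 C := permop (fun j => (j.2, j.1.2, j.1.1)).
Definition V_BC : op3 C := permop (fun j => (j.1.1, j.2, j.1.2)).
(* cyclic permutation of the factors A -> B -> C -> A:
   V_(ABC) |x y z> = |z x y>, and V_(CBA) = V_(ABC)^dagger. *)
Definition V_ABC : op3 C := permop (fun j => (j.2, j.1.1, j.1.2)).
Definition V_CBA : op3 C := permop (fun j => (j.1.2, j.2, j.1.1)).

Definition opadd (M N : op3 C) : op3 C := fun i j => M i j + N i j.
Definition opscale (k : C) (M : op3 C) : op3 C := fun i j => k * M i j.

Definition unit_vec (v : 'I_2 -> C) : Prop := \sum_(k < 2) v k * (v k)^* = 1.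

Definition prodvec (v1 v2 v3 : 'I_2 -> C) (i : idx3) : C :=
  v1 i.1.1 * v2 i.1.2 * v3 i.2.

Definition expval (M : op3 C) (psi : idx3 -> C) : C :=
  \sum_(i : idx3) \sum_(j : idx3) (psi i)^* * M i j * psi j.

Definition local_positive (M : op3 C) : Prop :=
  forall v1 v2 v3 : 'I_2 -> C, unit_vec v1 -> unit_vec v2 -> unit_vec v3 ->
    0 <= expval M (prodvec v1 v2 v3).

(* partial traces; the result acts on the two remaining factors in order *)
Definition ptrA (M : op3 C) : op2 C :=
  fun p q => \sum_(x < 2) M (x, p.1, p.2) (x, q.1, q.2).
Definition ptrB (M : op3 C) : op2 C :=
  fun p q => \sum_(x < 2) M (p.1, x, p.2) (q.1, x, q.2).
Definition ptrC (M : op3 C) : op2 C :=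
  fun p q => \sum_(x < 2) M (p.1, p.2, x) (q.1, q.2, x).

Definition w_prime (a b c d : C) : op3 C :=
  opadd (opadd (opadd (opscale a Id3) (opscale b V_AB)) (opscale c V_AC))
        (opscale d V_BC).

Definition w_full (a b c d f : C) : op3 C :=
  opadd (w_prime a b c d)
        (opscale ('i * f / 2%:R) (opadd V_ABC (opscale (-1) V_CBA))).
End Ops.

(* Entrywise complex conjugation of a product vector is again a product of
   unit vectors, and since the permutation operators have real matrices it
   turns the expectation of V_(ABC) into that of its inverse V_(CBA) while
   fixing the expectations of the transpositions.  Hence it maps the
   expectation of w (with parameter f) to that of w with parameter -f, and
   the average of the two is the expectation of w'.  The partial traces agree
   because tracing out any one factor sends V_(ABC) and V_(CBA) to the same
   swap of the remaining two factors. *)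

From HB Require Import structures.
From mathcomp Require Import all_boot all_order all_algebra.
From mathcomp Require Import ring.
Set Implicit Arguments. Unset Strict Implicit. Unset Printing Implicit Defensive.
Import Order.TTheory GRing.Theory Num.Theory Num.Def.
Local Open Scope ring_scope.

Definition conjf {C : numClosedFieldType} {T : Type} (v : T -> C) : T -> C :=
  fun x => (v x)^*.

Section PermutationOperators.
Variable C : numClosedFieldType.
Implicit Types (M N : op3 C) (psi phi : idx3 -> C) (s t : idx3 -> idx3).

Lemma eq_expval M psi phi : psi =1 phi -> expval M psi = expval M phi.
Proof. by move=> e; apply: eq_bigr => i _; apply: eq_bigr => j _; rewrite !e. Qed.

Lemma expval_opadd M N psi :
  expval (opadd M N) psi = expval M psi + expval N psi.
Proof.
rewrite /expval -big_split; apply: eq_bigr => i _.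
by rewrite -big_split; apply: eq_bigr => j _; rewrite /opadd mulrDr mulrDl.
Qed.

Lemma expval_opscale k M psi : expval (opscale k M) psi = k * expval M psi.
Proof.
rewrite /expval mulr_sumr; apply: eq_bigr => i _.
by rewrite mulr_sumr; apply: eq_bigr => j _; rewrite /opscale; ring.
Qed.

Lemma expval_permop s psi :
  expval (permop C s) psi = \sum_j (psi (s j))^* * psi j.
Proof.
rewrite /expval exchange_big; apply: eq_bigr => j _.
rewrite (bigD1 (s j)) //= /permop eqxx mulr1 big1 ?addr0 // => i /negbTE ->.
by rewrite mulr0 mul0r.
Qed.

Lemma expval_permop_conjf s t psi : cancel s t -> cancel t s ->
  expval (permop C s) (conjf psi) = expval (permop C t) psi.
Proof.
move=> st ts; rewrite !expval_permop (reindex_inj (can_inj ts)) /=.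
by apply: eq_bigr => j _; rewrite /conjf ts conjCK mulrC.
Qed.

Lemma expval_permop_conjf_invol s psi : involutive s ->
  expval (permop C s) (conjf psi) = expval (permop C s) psi.
Proof. by move=> ss; apply: expval_permop_conjf. Qed.

Lemma unit_vec_conjf (v : 'I_2 -> C) : unit_vec v -> unit_vec (conjf v).
Proof.
rewrite /unit_vec => <-; apply: eq_bigr => k _.
by rewrite /conjf conjCK mulrC.
Qed.

Lemma prodvec_conjf (v1 v2 v3 : 'I_2 -> C) :
  prodvec (conjf v1) (conjf v2) (conjf v3) =1 conjf (prodvec v1 v2 v3).
Proof. by move=> i; rewrite /conjf /prodvec !rmorphM. Qed.

Lemma ptrA_V_ABC_CBA p q : ptrA (V_ABC C) p q = ptrA (V_CBA C) p q.
Proof.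
case: p q => [p1 p2] [q1 q2]; rewrite /ptrA !big_ord_recl !big_ord0 /V_ABC /V_CBA /permop.
by case: p1 p2 q1 q2 => [[|[|//]] ?] [[|[|//]] ?] [[|[|//]] ?] [[|[|//]] ?] /=;
  rewrite ?(addr0, add0r).
Qed.

Lemma ptrB_V_ABC_CBA p q : ptrB (V_ABC C) p q = ptrB (V_CBA C) p q.
Proof.
case: p q => [p1 p2] [q1 q2]; rewrite /ptrB !big_ord_recl !big_ord0 /V_ABC /V_CBA /permop.
by case: p1 p2 q1 q2 => [[|[|//]] ?] [[|[|//]] ?] [[|[|//]] ?] [[|[|//]] ?] /=;
  rewrite ?(addr0, add0r).
Qed.

Lemma ptrC_V_ABC_CBA p q : ptrC (V_ABC C) p q = ptrC (V_CBA C) p q.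
Proof.
case: p q => [p1 p2] [q1 q2]; rewrite /ptrC !big_ord_recl !big_ord0 /V_ABC /V_CBA /permop.
by case: p1 p2 q1 q2 => [[|[|//]] ?] [[|[|//]] ?] [[|[|//]] ?] [[|[|//]] ?] /=;
  rewrite ?(addr0, add0r).
Qed.

End PermutationOperators.

Section ThreeQubitWerner.
Variables (C : numClosedFieldType) (a b c d : C).
Implicit Types (psi : idx3 -> C).

Lemma expval_w_full f psi : expval (w_full a b c d f) psi =
  expval (w_prime a b c d) psi +
  'i * f / 2%:R * (expval (V_ABC C) psi - expval (V_CBA C) psi).
Proof. by rewrite /w_full !(expval_opadd, expval_opscale) mulN1r. Qed.

Lemma expval_w_prime_conjf psi :
  expval (w_prime a b c d) (conjf psi) = expval (w_prime a b c d) psi.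
Proof.
rewrite /w_prime !(expval_opadd, expval_opscale).
by rewrite !expval_permop_conjf_invol //; case=> [[]].
Qed.

Lemma expval_w_full_conjf f psi :
  expval (w_full a b c d f) (conjf psi) = expval (w_full a b c d (- f)) psi.
Proof.
rewrite !expval_w_full expval_w_prime_conjf.
rewrite (@expval_permop_conjf _ _ (fun j => (j.1.2, j.2, j.1.1))); try by case=> [[]].
rewrite (@expval_permop_conjf _ _ (fun j => (j.2, j.1.1, j.1.2))); try by case=> [[]].
by rewrite /V_ABC /V_CBA; ring.
Qed.

Lemma expval_w_full_add_opp f psi :
  expval (w_full a b c d f) psi + expval (w_full a b c d (- f)) psi =
  expval (w_prime a b c d) psi *+ 2.
Proof. by rewrite !expval_w_full mulr2n; ring. Qed.

Lemma local_positive_w_full_opp f :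
  local_positive (w_full a b c d f) -> local_positive (w_full a b c d (- f)).
Proof.
move=> pos_w v1 v2 v3 u1 u2 u3.
have := pos_w _ _ _ (unit_vec_conjf u1) (unit_vec_conjf u2) (unit_vec_conjf u3).
by rewrite (eq_expval _ (prodvec_conjf v1 v2 v3)) expval_w_full_conjf.
Qed.

Lemma local_positive_w_prime f :
  local_positive (w_full a b c d f) -> local_positive (w_prime a b c d).
Proof.
move=> pos_w v1 v2 v3 u1 u2 u3.
have pos_sum := addr_ge0 (pos_w v1 v2 v3 u1 u2 u3)
  (local_positive_w_full_opp pos_w u1 u2 u3).
by rewrite expval_w_full_add_opp pmulrn_lge0 in pos_sum.
Qed.

Lemma w_fullE f i j : w_full a b c d f i j =
  w_prime a b c d i j + 'i * f / 2%:R * (V_ABC C i j - V_CBA C i j).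
Proof. by rewrite /w_full /opadd /opscale mulN1r. Qed.

Lemma sum_w_full f (e e' : 'I_2 -> idx3) :
  \sum_x V_ABC C (e x) (e' x) = \sum_x V_CBA C (e x) (e' x) ->
  \sum_x w_full a b c d f (e x) (e' x) = \sum_x w_prime a b c d (e x) (e' x).
Proof.
move=> eq_cyc; under eq_bigr do rewrite w_fullE.
by rewrite big_split /= -mulr_sumr sumrB eq_cyc subrr mulr0 addr0.
Qed.

Lemma ptrA_w_full f p q : ptrA (w_full a b c d f) p q = ptrA (w_prime a b c d) p q.
Proof. exact: sum_w_full (ptrA_V_ABC_CBA C p q). Qed.

Lemma ptrB_w_full f p q : ptrB (w_full a b c d f) p q = ptrB (w_prime a b c d) p q.
Proof. exact: sum_w_full (ptrB_V_ABC_CBA C p q). Qed.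

Lemma ptrC_w_full f p q : ptrC (w_full a b c d f) p q = ptrC (w_prime a b c d) p q.
Proof. exact: sum_w_full (ptrC_V_ABC_CBA C p q). Qed.

End ThreeQubitWerner.

Theorem mainTheorem11 (C : numClosedFieldType) (a b c d f : C)
  (ha : a \is Num.real) (hb : b \is Num.real) (hc : c \is Num.real)
  (hd : d \is Num.real) (hf : f \is Num.real) :
  local_positive (w_full a b c d f) ->
  local_positive (w_prime a b c d) /\
  (forall p q, ptrA (w_full a b c d f) p q = ptrA (w_prime a b c d) p q) /\
  (forall p q, ptrB (w_full a b c d f) p q = ptrB (w_prime a b c d) p q) /\
  (forall p q, ptrC (w_full a b c d f) p q = ptrC (w_prime a b c d) p q).
Proof.
move=> pos_w; split; first exact: local_positive_w_prime pos_w.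
split; [|split] => p q; [exact: ptrA_w_full | exact: ptrB_w_full | exact: ptrC_w_full].
Qed.
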